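(* If $G$ is a noncyclic finite $p$-group and $N$ is a normal subgroup of $G$ such that $\eta(G/N) = \eta(G)$, then $N \le G'$.
   Context: A cyclic subgroup $C$ of a group $G$ is maximal cyclic if there is no cyclic subgroup $D$ of $G$ with $C < D$. $\eta(G)$ denotes the number of conjugacy classes of maximal cyclic subgroups of $G$. $G'$ is the derived subgroup of $G$. *)

From mathcomp Require Import all_boot all_order all_fingroup all_solvable.
Set Implicit Arguments. Unset Strict Implicit. Unset Printing Implicit Defensive.
Local Open Scope group_scope.

Definition max_cyclic_subgroups (gT : finGroupType) (G : {set gT}) :
    {set {group gT}} :=
  [set C : {group gT} | [max C | (C \subset G) && cyclic C]].

Definition eta (gT : finGroupType) (G : {group gT}) : nat :=
  #|[set orbit 'JG G C | C in max_cyclic_subgroups G]|.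

From mathcomp Require Import all_boot all_order all_fingroup all_solvable.
Set Implicit Arguments. Unset Strict Implicit. Unset Printing Implicit Defensive.
Local Open Scope group_scope.

(* Suppose N is not contained in D = G'. Every maximal cyclic subgroup of G/N
   is the image of a maximal cyclic subgroup of G, so eta(G/N) <= eta(G), and
   equality forces any two such lifts with the same image to be G-conjugate,
   hence to have the same image in the abelian group G/D. Lifting the
   maximal cyclic subgroup generated by xN through every y in xN then shows
   that G/D is covered by cyclic subgroups all containing ND/D <> 1. In an
   abelian p-group this makes the socle cyclic, so G/D is cyclic, and hence so
   is the p-group G. *)

Section MaxCyclic.

Variables (gT : finGroupType) (G : {group gT}).

Lemma max_cyclic_sub_cyclic (M : {group gT}) :
  M \in max_cyclic_subgroups G -> M \subset G /\ cyclic M.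
Proof. by rewrite inE => /maxgroupP[/andP[]]. Qed.

Lemma max_cyclic_exists (H : {group gT}) :
  H \subset G -> cyclic H ->
  exists2 M : {group gT}, M \in max_cyclic_subgroups G & H \subset M.
Proof.
move=> sHG cycH; have gpH : (H \subset G) && cyclic H by apply/andP.
have [M maxM sHM] :=
  @maxgroup_exists _ (fun M : {group gT} => (M \subset G) && cyclic M) H gpH.
by exists M; rewrite ?inE.
Qed.

End MaxCyclic.

Lemma quotient_der1_conj (gT : finGroupType) (G M : {group gT}) g :
  M \subset G -> g \in G -> M :^ g / G^`(1) = M / G^`(1).
Proof.
move=> sMG Gg; have nDG := normal_norm (der_normal 1 G).
rewrite quotientJ ?(subsetP nDG) //; apply/normP.
apply: (subsetP (sub_abelian_norm (sub_der1_abelian (subxx _)) (quotientS _ sMG))).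
exact: mem_quotient.
Qed.

Lemma abelian_pgroup_cyclic_cover (gT : finGroupType) (p : nat) (A B : {group gT}) :
    p.-group A -> abelian A -> B \subset A -> B :!=: 1 ->
    (forall a, a \in A ->
       exists2 C : {group gT}, cyclic C & B \subset C /\ a \in C) ->
  cyclic A.
Proof.
move=> pA abA sBA ntB cover.
have [_ p_dvd_B _] := pgroup_pdiv (pgroupS sBA pA) ntB.
have abOhm : abelian 'Ohm_1(A) := abelianS (Ohm_sub 1 A) abA.
(* An element of order dividing p lies in the cyclic group C containing B,
   and the subgroups of a cyclic group are ordered by their orders. *)
have sOhmB : 'Ohm_1(A) \subset B.
  apply/subsetP=> a; rewrite (OhmEabelian pA abOhm) inE => /andP[Aa].
  rewrite inE expn1 => ap1.
  have [C cycC [sBC Ca]] := cover a Aa.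
  rewrite -cycle_subG -(cardSg_cyclic cycC) ?cycle_subG //.
  by rewrite (dvdn_trans _ p_dvd_B) // -orderE order_dvdn.
have [C cycC [sBC _]] := cover 1 (group1 A).
rewrite (abelian_rank1_cyclic abA) -rank_Ohm1 -(abelian_rank1_cyclic abOhm).
exact: cyclicS (subset_trans sOhmB sBC) cycC.
Qed.

Section Lifts.

Variables (gT : finGroupType) (G N : {group gT}).
Hypothesis nNG : G \subset 'N(N).

Definition max_cyclic_lifts : {set {group gT}} :=
  [set M in max_cyclic_subgroups G | (M / N)%G \in max_cyclic_subgroups (G / N)].

Lemma quotient_orbitJG (M : {group gT}) :
  [set (X / N)%G | X in orbit 'JG G M] = orbit 'JG (G / N) (M / N)%G.
Proof.
apply/setP=> Y; apply/imsetP/idP.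
- case=> X /orbitP[g Gg <-] ->; apply/orbitP; exists (coset N g).
    exact: mem_quotient.
  by apply: val_inj; rewrite /= quotientJ ?(subsetP nNG).
- case/orbitP=> _ /morphimP[g Ng Gg ->] <-; exists ('JG%act M g).
    by apply/orbitP; exists g.
  by apply: val_inj; rewrite /= quotientJ.
Qed.

Lemma cyclic_quotient_gen (C : {group coset_of N}) :
  C \subset G / N -> cyclic C -> exists2 x, x \in G & C :=: <[coset N x]>.
Proof.
move=> sCGN /cyclicP[xN defC].
have /morphimP[x _ Gx defxN] : xN \in G / N by rewrite (subsetP sCGN) ?defC ?cycle_id.
by exists x; rewrite // defC defxN.
Qed.

Lemma max_cyclic_lift (C : {group coset_of N}) y :
    C \in max_cyclic_subgroups (G / N) -> y \in G -> C :=: <[coset N y]> ->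
  exists2 M : {group gT}, M \in max_cyclic_lifts & y \in M /\ (M / N)%G = C.
Proof.
move=> maxC Gy defC.
have sYG : <[y]> \subset G by rewrite cycle_subG.
have [M maxM sYM] := max_cyclic_exists sYG (cycle_cyclic y).
have [sMG cycM] := max_cyclic_sub_cyclic maxM.
have yM : y \in M by rewrite -cycle_subG.
have MN_C : (M / N)%G = C.
  apply: val_inj; move: maxC; rewrite inE => /maxgroupP[_]; apply.
    by rewrite /= quotientS ?quotient_cyclic.
  by rewrite defC cycle_subG mem_quotient.
by exists M; rewrite // inE maxM MN_C maxC.
Qed.

Let lift_classes := [set orbit 'JG G M | M in max_cyclic_lifts].

Let quotient_class (O : {set {group gT}}) := [set (X / N)%G | X in O].

Lemma eta_quotient_lift_classes :
  eta (G / N)%G = #|quotient_class @: lift_classes|.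
Proof.
rewrite /eta; congr #|pred_of_set _|; apply/setP=> Z; apply/imsetP/imsetP.
- case=> C maxC ->; have [sCGN cycC] := max_cyclic_sub_cyclic maxC.
  have [x Gx defC] := cyclic_quotient_gen sCGN cycC.
  have [M liftM [_ MN_C]] := max_cyclic_lift maxC Gx defC.
  exists (orbit 'JG G M); first exact: imset_f.
  by rewrite /quotient_class quotient_orbitJG MN_C.
- case=> _ /imsetP[M liftM ->] ->; exists (M / N)%G.
    by move: liftM; rewrite inE => /andP[].
  by rewrite /quotient_class quotient_orbitJG.
Qed.

(* Equality of eta forces the class map to be injective, since the number of
   classes of lifts lies between eta (G / N) and eta G. *)
Lemma max_cyclic_lifts_conj :
    eta (G / N)%G = eta G ->
  {in max_cyclic_lifts &, forall M1 M2,
     (M1 / N)%G = (M2 / N)%G -> M2 \in orbit 'JG G M1}.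
Proof.
move=> eta_eq M1 M2 liftM1 liftM2 eqMN.
have inj_class : {in lift_classes &, injective quotient_class}.
  apply/imset_injP; rewrite eqn_leq leq_imset_card.
  rewrite -eta_quotient_lift_classes eta_eq; apply/subset_leq_card/imsetS.
  by apply/subsetP=> M; rewrite inE => /andP[].
have -> : orbit 'JG G M1 = orbit 'JG G M2.
  by apply: inj_class; rewrite ?imset_f // /quotient_class !quotient_orbitJG eqMN.
exact: orbit_refl.
Qed.

End Lifts.

Section Cover.

Variables (gT : finGroupType) (G N : {group gT}).
Hypotheses (nsNG : N <| G) (eta_eq : eta (G / N)%G = eta G).

Local Notation D := G^`(1).

Let nNG : G \subset 'N(N) := normal_norm nsNG.
Let nDG : G \subset 'N(D) := normal_norm (der_normal 1 G).

Lemma max_cyclic_lift_der1 (M : {group gT}) y :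
    M \in max_cyclic_lifts G N -> y \in G -> (M / N)%G :=: <[coset N y]> ->
  coset D y \in M / D.
Proof.
move=> liftM Gy defMN; have maxMN : (M / N)%G \in max_cyclic_subgroups (G / N).
  by move: liftM; rewrite inE => /andP[].
have [M' liftM' [yM' M'N_MN]] := max_cyclic_lift maxMN Gy defMN.
have /orbitP[g Gg /(congr1 val)/= defM'] :=
  max_cyclic_lifts_conj nNG eta_eq liftM liftM' (esym M'N_MN).
have [sMG _] := max_cyclic_sub_cyclic (setIdP liftM).1.
by rewrite -(quotient_der1_conj sMG Gg) defM' mem_quotient.
Qed.

Lemma max_cyclic_lift_cover g :
    g \in G ->
  exists2 M : {group gT}, M \in max_cyclic_subgroups G &
    N / D \subset M / D /\ coset D g \in M / D.
Proof.
move=> Gg.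
have sgGN : <[g]> / N \subset G / N by rewrite quotientS ?cycle_subG.
have [C maxC sgC] := max_cyclic_exists sgGN (quotient_cyclic N (cycle_cyclic g)).
have [sCGN cycC] := max_cyclic_sub_cyclic maxC.
have [x Gx defC] := cyclic_quotient_gen sCGN cycC.
have [M liftM [_ MN_C]] := max_cyclic_lift maxC Gx defC.
have maxM := (setIdP liftM).1; have [sMG _] := max_cyclic_sub_cyclic maxM.
have defMC : M / N = C by rewrite -MN_C.
have defMN : (M / N)%G :=: <[coset N x]> by rewrite /= defMC.
(* Both x and x n generate M / N, so both lie in M / D. *)
have sND : N / D \subset M / D.
  apply/subsetP=> _ /morphimP[n _ Nn ->].
  have Gn := subsetP (normal_sub nsNG) n Nn.
  have xnD : coset D (x * n) \in M / D.
    by apply: max_cyclic_lift_der1; rewrite ?groupM // coset_kerr.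
  have xD : coset D x \in M / D by exact: max_cyclic_lift_der1.
  change (coset D n \in M / D).
  suff -> : coset D n = (coset D x)^-1 * coset D (x * n) by rewrite groupM ?groupV.
  by rewrite morphM ?mulKg ?(subsetP nDG).
have gNM : g \in N * M.
  rewrite -quotientK ?(subset_trans sMG nNG) // mem_morphpre ?(subsetP nNG) //.
  by rewrite defMC (subsetP sgC) ?mem_quotient ?cycle_id.
exists M => //; split=> //; have /mulsgP[n m Nn Mm ->] := gNM.
have [Gn Gm] := (subsetP (normal_sub nsNG) n Nn, subsetP sMG m Mm).
rewrite morphM ?(subsetP nDG) //; apply: groupM; last exact: mem_quotient.
by rewrite (subsetP sND) ?mem_quotient.
Qed.

End Cover.

Theorem corollary4p4 (gT : finGroupType) (p : nat) (G N : {group gT}) :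
  prime p -> p.-group G -> ~~ cyclic G -> N <| G ->
  eta (G / N)%G = eta G -> N \subset G^`(1).
Proof.
move=> _ pG ncG nsNG eta_eq; apply: contraR ncG => not_sND.
have nDG := normal_norm (der_normal 1 G).
apply: (cyclic_nilpotent_quo_der1_cyclic (pgroup_nil pG)).
apply: (@abelian_pgroup_cyclic_cover _ p _ (N / G^`(1))%G).
- exact: quotient_pgroup.
- exact: sub_der1_abelian.
- exact: quotientS (normal_sub nsNG).
- by rewrite -subG1 quotient_sub1 // (subset_trans (normal_sub nsNG) nDG).
- move=> _ /morphimP[g _ Gg ->].
  have [M /max_cyclic_sub_cyclic[_ cycM] coverM] := max_cyclic_lift_cover nsNG eta_eq Gg.
  by exists (M / G^`(1))%G; first exact: quotient_cyclic.
Qed.
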